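(* Let $p\ge1$, $m\in\mathbb{N}$, $a,b>0$, $\beta\in\mathbb{R}^p$, and let $\xi$ be a design on $\mathcal{X}$. Then the Poisson–Gamma information matrix $M(\xi;\beta)$ and the Poisson information matrix $M_{Po}(\xi;\beta)$ have the same rank.
   Context: Let $\mathcal{X}\subseteq\mathbb{R}^k$ be a design region and $f=(1,f_1,\ldots,f_{p-1})^T:\mathcal{X}\to\mathbb{R}^p$ a vector of regression functions whose first component is the constant 1. A design $\xi$ is a probability measure on $\mathcal{X}$ with finite support $x_1,\ldots,x_l$ and weights $w_1,\ldots,w_l\ge0$, $\sum_j w_j=1$. The Poisson information matrix is $M_{Po}(\xi;\beta)=\sum_{j=1}^l w_j\exp(f(x_j)^T\beta)f(x_j)f(x_j)^T$, and the Poisson–Gamma information matrix is $M(\xi;\beta)=\frac{a}{b}\Bigl(M_{Po}(\xi;\beta)-\frac{M_{Po}(\xi;\beta)e_1e_1^TM_{Po}(\xi;\beta)}{e_1^TM_{Po}(\xi;\beta)e_1+b/m}\Bigr)$, where $e_1$ is the first standard unit vector of $\mathbb{R}^p$. *)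

From HB Require Import structures.
From mathcomp Require Import all_boot all_order all_algebra.
From mathcomp Require Import reals.
From mathcomp Require Import sequences exp.
Set Implicit Arguments. Unset Strict Implicit. Unset Printing Implicit Defensive.
Import Order.TTheory GRing.Theory Num.Theory.
Local Open Scope ring_scope.

Definition e1 (R : nzRingType) (p : nat) (hp : (0 < p)%N) : 'cV[R]_p :=
  delta_mx (Ordinal hp) 0.

Definition MPo (R : realType) (k p l : nat) (f : 'rV[R]_k -> 'cV[R]_p)
  (x : 'I_l -> 'rV[R]_k) (w : 'I_l -> R) (beta : 'cV[R]_p) : 'M[R]_p :=
  \sum_(j < l) (w j * expR (((f (x j))^T *m beta) 0 0))
                  *: (f (x j) *m (f (x j))^T).

Definition MPG (R : realType) (k p l : nat) (hp : (0 < p)%N) (a b : R) (m : nat)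
  (f : 'rV[R]_k -> 'cV[R]_p) (x : 'I_l -> 'rV[R]_k) (w : 'I_l -> R)
  (beta : 'cV[R]_p) : 'M[R]_p :=
  let M := MPo f x w beta in
  let e := e1 R hp in
  (a / b) *: (M - (((e^T *m M *m e) 0 0 + b / m%:R)^-1
                     *: (M *m e *m e^T *m M))).

From HB Require Import structures.
From mathcomp Require Import all_boot all_order all_algebra.
From mathcomp Require Import reals.
From mathcomp Require Import sequences exp.
From mathcomp Require Import ring.
Set Implicit Arguments. Unset Strict Implicit. Unset Printing Implicit Defensive.
Import Order.TTheory GRing.Theory Num.Theory.
Local Open Scope ring_scope.

(* [M - c M e e^T M] factors as [M (1 - c e e^T M)], and by Sherman-Morrison
   the second factor is invertible as soon as [1 - c e^T M e != 0].  For the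
   Poisson-Gamma matrix [c = 1 / (s + t)] with [s = e^T M e >= 0] (the weights
   are nonnegative) and [t = b / m > 0], so that [1 - c s = t / (s + t) > 0];
   the factor [a / b > 0] does not affect the rank either. *)

Lemma unitmx_1_sub_rank1 (F : fieldType) (n : nat) (u : 'cV[F]_n)
    (v : 'rV[F]_n) (c : F) :
  1 - c * (v *m u) 0 0 != 0 -> 1%:M - c *: (u *m v) \in unitmx.
Proof.
set s := (v *m u) 0 0 => defect_neq0.
have uvuv : u *m v *m (u *m v) = s *: (u *m v).
  by rewrite mulmxA -(mulmxA u) [v *m u]mx11_scalar mul_mx_scalar scalemxAl.
(* Sherman-Morrison: the inverse is [1 + c / (1 - c s) u v]. *)
set d := c / (1 - c * s).
have inv : (1%:M - c *: (u *m v)) *m (1%:M + d *: (u *m v)) = 1%:M.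
  rewrite mulmxDr mulmx1 mulmxBl mul1mx -scalemxAr -scalemxAl uvuv !scalerA.
  rewrite -addrA -scalerBl -scaleNr -scalerDl.
  have -> : - c + (d - d * c * s) = 0 by rewrite /d; field.
  by rewrite scale0r addr0.
by case: (mulmx1_unit inv).
Qed.

Lemma mxrank_sub_rank1 (F : fieldType) (m n : nat) (A : 'M[F]_(m, n))
    (u : 'cV[F]_n) (v : 'rV[F]_m) (c : F) :
  1 - c * (v *m A *m u) 0 0 != 0 ->
  \rank (A - c *: (A *m u *m v *m A)) = \rank A.
Proof.
move=> defect_neq0.
have -> : A - c *: (A *m u *m v *m A) = A *m (1%:M - c *: (u *m (v *m A))).
  by rewrite mulmxBr mulmx1 -scalemxAr !mulmxA.
by rewrite mxrankMfree // row_free_unit unitmx_1_sub_rank1 // mulmxA.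
Qed.

Lemma quad_e1 (R : nzRingType) (p : nat) (hp : (0 < p)%N) (A : 'M[R]_p) :
  ((e1 R hp)^T *m A *m e1 R hp) 0 0 = A (Ordinal hp) (Ordinal hp).
Proof. by rewrite /e1 trmx_delta -rowE -colE !mxE. Qed.

Lemma MPo_diag_ge0 (R : realType) (k p l : nat) (f : 'rV[R]_k -> 'cV[R]_p)
    (x : 'I_l -> 'rV[R]_k) (w : 'I_l -> R) (beta : 'cV[R]_p) (i : 'I_p) :
  (forall j, 0 <= w j) -> 0 <= MPo f x w beta i i.
Proof.
move=> w_ge0; rewrite /MPo summxE; apply: sumr_ge0 => j _.
rewrite mxE; apply: mulr_ge0; first by rewrite mulr_ge0 ?expR_ge0.
by rewrite mxE; apply: sumr_ge0 => r _; rewrite mxE -expr2 sqr_ge0.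
Qed.

Theorem lemma1 (R : realType) (k p : nat) (hp : (0 < p)%N)
  (X : 'rV[R]_k -> Prop) (f : 'rV[R]_k -> 'cV[R]_p)
  (hf1 : forall z, f z (Ordinal hp) 0 = 1)
  (m : nat) (hm : (0 < m)%N) (a b : R) (ha : 0 < a) (hb : 0 < b)
  (beta : 'cV[R]_p)
  (l : nat) (x : 'I_l -> 'rV[R]_k) (w : 'I_l -> R)
  (hxX : forall j, X (x j)) (hw0 : forall j, 0 <= w j)
  (hw1 : \sum_(j < l) w j = 1) :
  \rank (MPG hp a b m f x w beta) = \rank (MPo f x w beta).
Proof.
have ab_neq0 : a / b != 0 by rewrite gt_eqF ?divr_gt0.
rewrite /MPG mxrank_scale_nz //=.
set M := MPo f x w beta; set e := e1 R hp.
set s := (e^T *m M *m e) 0 0; set t := b / m%:R.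
apply: (mxrank_sub_rank1 (A := M) (u := e) (v := e^T)); rewrite -/s.
have s_ge0 : 0 <= s by rewrite /s quad_e1 MPo_diag_ge0.
have t_gt0 : 0 < t by rewrite divr_gt0 ?ltr0n.
have st_neq0 : s + t != 0 by rewrite gt_eqF ?ltr_wpDl.
clearbody s t.
have -> : 1 - (s + t)^-1 * s = t / (s + t) by field.
by rewrite mulf_neq0 ?invr_eq0 ?(gt_eqF t_gt0).
Qed.
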